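(* Let $T_1$ and $T_2$ be equidistant trees on leaf set $\{1,\dots,n\}$ with ultrametrics $u^1,u^2\in\mathbb{R}^e$, $e=\binom n2$. If $(\operatorname{argmax})^i\{u^1\}=(\operatorname{argmax})^i\{u^2\}$ for all $0<i<e$, then $T_1$ and $T_2$ have the same tree topology.
   Context: An equidistant tree is a rooted phylogenetic tree with nonnegative edge lengths and all root-to-leaf distances equal; its ultrametric is the vector $u=(u_{12},\dots,u_{n-1,n})$ of pairwise leaf distances (for all distinct $i,j,k$ the maximum of $u_{ij},u_{ik},u_{jk}$ is attained at least twice). For a vector $x$, $(\operatorname{argmax})^i\{x\}$ denotes the set of indices of entries of $x$ achieving the $i$-th largest value among the entries of $x$. *)

From HB Require Import structures.
From mathcomp Require Import all_boot all_order all_algebra.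
Set Implicit Arguments. Unset Strict Implicit. Unset Printing Implicit Defensive.
Import Order.TTheory GRing.Theory Num.Theory.
Local Open Scope ring_scope.

(* A rooted phylogenetic tree on leaf set 'I_n = {1,...,n} is encoded by its
   hierarchy of clusters H (the leaf sets below each vertex); each non-root
   vertex v (cluster C) carries the length w C of the edge from v to its parent. *)
Definition hierarchy (n : nat) (H : {set {set 'I_n}}) : Prop :=
  [/\ [set: 'I_n] \in H, set0 \notin H, (forall i : 'I_n, [set i] \in H) &
      (forall A B, A \in H -> B \in H ->
         [|| A \subset B, B \subset A | [disjoint A & B]])].

Definition root_dist (R : realFieldType) (n : nat) (H : {set {set 'I_n}})
  (w : {set 'I_n} -> R) (i : 'I_n) : R :=
  \sum_(C in H | (C != [set: 'I_n]) && (i \in C)) w C.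

Definition equidistant_tree (R : realFieldType) (n : nat) (H : {set {set 'I_n}})
  (w : {set 'I_n} -> R) : Prop :=
  [/\ hierarchy H,
      (forall C, C \in H -> C != [set: 'I_n] -> 0 <= w C) &
      (forall i j : 'I_n, root_dist H w i = root_dist H w j)].

(* coordinates of R^e, e = 'C(n,2): unordered pairs {i,j}, encoded as i < j *)
Definition pair_idx (n : nat) := {p : 'I_n * 'I_n | (p.1 < p.2)%N}.

Definition tree_dist (R : realFieldType) (n : nat) (H : {set {set 'I_n}})
  (w : {set 'I_n} -> R) (i j : 'I_n) : R :=
  \sum_(C in H | (C != [set: 'I_n]) && ((i \in C) != (j \in C))) w C.

Definition ultrametric (R : realFieldType) (n : nat) (H : {set {set 'I_n}})
  (w : {set 'I_n} -> R) : pair_idx n -> R :=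
  fun p => tree_dist H w (val p).1 (val p).2.

Definition sorted_vals (R : realFieldType) (I : finType) (x : I -> R) : seq R :=
  sort (fun a b => b <= a) (undup [seq x p | p <- enum I]).

(* (argmax)^k {x}: indices achieving the k-th largest value (k >= 1);
   empty if x has fewer than k distinct values *)
Definition argmax_k (R : realFieldType) (I : finType) (k : nat) (x : I -> R)
  : {set I} :=
  [set p | (k.-1 < size (sorted_vals x))%N && (x p == nth 0 (sorted_vals x) k.-1)].

(* tree topology: the nontrivial clusters (neither singletons nor the whole leaf
   set) whose edge has positive length, i.e. the rooted tree shape after
   contracting edges of length zero *)
Definition topology (R : realFieldType) (n : nat) (H : {set {set 'I_n}})
  (w : {set 'I_n} -> R) : {set {set 'I_n}} :=
  [set C in H | [&& (1 < #|C|)%N, C != [set: 'I_n] & 0 < w C]].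

From HB Require Import structures.
From mathcomp Require Import all_boot all_order all_algebra.
From mathcomp Require Import zify lra.
Set Implicit Arguments. Unset Strict Implicit. Unset Printing Implicit Defensive.
Import Order.TTheory GRing.Theory Num.Theory.
Local Open Scope ring_scope.

(* In an equidistant tree with root-to-leaf distance h, the leaves i and j are
   at distance 2 (h - lca_depth i j), where lca_depth i j is the length of the
   path from the root to their last common ancestor.  Hence a set C of at
   least two leaves, but not all of them, is a cluster whose edge has positive
   length exactly when it is isolated: any two leaves of C are strictly closer
   to each other than to any leaf outside C.  So the topology depends only on
   the strict order of the entries of u.  That order is recovered from the sets
   (argmax)^k {u}, 0 < k < e: they give the rank of every entry of rank below
   e - 1, and as u has at most e distinct values, all other entries have rank
   exactly e - 1. *)

Section Rank.
Variables (R : realFieldType) (I : finType) (x : I -> R).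

Definition rank p := index (x p) (sorted_vals x).

Lemma sorted_vals_uniq : uniq (sorted_vals x).
Proof. by rewrite sort_uniq undup_uniq. Qed.

Lemma sorted_vals_sorted : sorted (fun a b : R => b <= a) (sorted_vals x).
Proof. by apply: sort_sorted => a b; apply: le_total. Qed.

Lemma mem_sorted_vals p : x p \in sorted_vals x.
Proof. by rewrite mem_sort mem_undup map_f // mem_enum. Qed.

Lemma size_sorted_vals : (size (sorted_vals x) <= #|I|)%N.
Proof. by rewrite size_sort (leq_trans (size_undup _)) // size_map cardE. Qed.

Lemma rank_lt_card p : (rank p < #|I|)%N.
Proof.
by apply: leq_trans size_sorted_vals; rewrite index_mem mem_sorted_vals.
Qed.

Lemma rank_leq_le p q : (rank q <= rank p)%N -> x p <= x q.
Proof.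
have ge_trans : transitive (fun a b : R => b <= a).
  by move=> a b c ba cb; apply: le_trans cb ba.
apply: (sorted_leq_index ge_trans lexx sorted_vals_sorted);
  by rewrite mem_sorted_vals.
Qed.

Lemma rank_ltE p q : (x p < x q) = (rank q < rank p)%N.
Proof.
apply/idP/idP => [lt_pq|lt_qp].
  by rewrite ltnNge; apply: contraTN lt_pq => /rank_leq_le; rewrite -leNgt.
rewrite lt_neqAle (rank_leq_le (ltnW lt_qp)) andbT.
by apply: contraTneq lt_qp => eq_pq; rewrite /rank eq_pq ltnn.
Qed.

Lemma mem_argmax_k k p : (p \in argmax_k k x) = (rank p == k.-1).
Proof.
rewrite inE /rank; apply/andP/eqP => [[lt_k /eqP ->]|<-].
  by rewrite index_uniq ?sorted_vals_uniq ?lt_k.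
by rewrite index_mem mem_sorted_vals nth_index ?mem_sorted_vals.
Qed.

End Rank.

Lemma argmax_k_eq_lt (R : realFieldType) (I : finType) (m : nat)
    (x y : I -> R) :
  (#|I| <= m)%N ->
  (forall k, (0 < k < m)%N -> argmax_k k x = argmax_k k y) ->
  forall p q, (x p < x q) = (y p < y q).
Proof.
move=> card_I eq_xy.
have rank_eq (u v : I -> R) p :
    (forall k, (0 < k < m)%N -> argmax_k k u = argmax_k k v) ->
    (rank u p < m.-1)%N -> rank v p = rank u p.
  move=> eq_uv lt_pm; apply/eqP.
  by rewrite -(mem_argmax_k _ (rank u p).+1) -eq_uv ?mem_argmax_k //; lia.
have eq_yx k : (0 < k < m)%N -> argmax_k k y = argmax_k k x.
  by move/eq_xy.
have rank_xy p : rank x p = rank y p.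
  have := leq_trans (rank_lt_card x p) card_I.
  have := leq_trans (rank_lt_card y p) card_I.
  case: (ltnP (rank x p) m.-1) => [/(rank_eq _ _ _ eq_xy) -> // | ge_x].
  case: (ltnP (rank y p) m.-1) => [/(rank_eq _ _ _ eq_yx) -> // | ge_y].
  lia.
by move=> p q; rewrite !rank_ltE !rank_xy.
Qed.

Lemma card_pair_idx n : #|{: pair_idx n}| = 'C(n, 2).
Proof.
rewrite -card_ltn_sorted_tuples.
pose f (p : pair_idx n) : 2.-tuple 'I_n := [tuple (val p).1; (val p).2].
have f_inj : injective f.
  by move=> [[a b] ?] [[c d] ?] [e1 e2]; apply: val_inj; rewrite /= e1 e2.
rewrite -(card_imset predT f_inj); apply: eq_card => t; rewrite inE.
apply/imsetP/idP => [[p _ ->]|]; first by rewrite /= andbT; apply: (valP p).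
case/tupleP: t => a t; case/tupleP: t => b t.
rewrite tuple0 /= andbT => lt_ab.
by exists (exist _ (a, b) lt_ab) => //; apply: val_inj.
Qed.

Section Hierarchy.
Variables (n : nat) (H : {set {set 'I_n}}).
Hypothesis hierH : hierarchy H.

Lemma hierarchy_laminar A B x : A \in H -> B \in H -> x \in A -> x \in B ->
  (A \subset B) || (B \subset A).
Proof.
case: hierH => _ _ _ nested AH BH xA xB.
case/or3P: (nested A B AH BH) => [-> // | -> | /disjointFr/(_ xA)].
  by rewrite orbT.
by rewrite xB.
Qed.

Lemma exists_least_cluster (P : pred {set 'I_n}) : P [set: 'I_n] ->
  exists A, [/\ A \in H, P A & forall B, B \in H -> P B -> (#|A| <= #|B|)%N].
Proof.
move=> PT; have TH : [set: 'I_n] \in H by case: hierH.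
have [|A /andP[AH PA] A_min] :=
  @arg_minnP _ [set: 'I_n] (fun A => (A \in H) && P A) (fun A => #|A|).
  by rewrite TH PT.
by exists A; split=> // B BH PB; apply: A_min; rewrite BH.
Qed.

Lemma least_cluster_sub (P : pred {set 'I_n}) A B x : A \in H ->
  (forall D, D \in H -> P D -> (#|A| <= #|D|)%N) ->
  B \in H -> P B -> x \in A -> x \in B -> A \subset B.
Proof.
move=> AH A_min BH PB xA xB.
case/orP: (hierarchy_laminar AH BH xA xB) => // sBA.
by have/eqP -> : B == A by rewrite eqEcard sBA A_min.
Qed.

Lemma exists_splitting_pair (C A : {set 'I_n}) :
  (1 < #|C|)%N -> A \in H -> C \subset A ->
  (forall B, B \in H -> C \subset B -> (#|A| <= #|B|)%N) ->
  exists i j, [/\ i \in C, j \in C, i != j &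
                  forall D, D \in H -> i \in D -> j \in D -> A \subset D].
Proof.
move=> C_gt1 AH sCA A_min.
have [i iC] : {i | i \in C} by apply/sigW/set0Pn; rewrite -card_gt0 ltnW.
have iA := subsetP sCA i iC.
(* X: a largest cluster through i inside A that misses a leaf j of C.  A
   cluster through i and j inside A strictly contains X, so it contains C. *)
have [|X /and4P[XH iX sXA sCX] X_max] := @arg_maxnP _ [set i]
  (fun X => [&& X \in H, i \in X, X \subset A & ~~ (C \subset X)])
  (fun X => #|X|).
  case: hierH => _ _ -> _; rewrite set11 sub1set iA /=.
  by apply: contraL C_gt1 => /subset_leq_card; rewrite cards1 -leqNgt.
have [j jC jX] := subsetPn sCX.
exists i, j; split=> // [|D DH iD jD]; first by apply: contraNneq jX => <-.
have sXD : X \subset D.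
  case/orP: (hierarchy_laminar XH DH iX iD) => // /subsetP/(_ j jD).
  by rewrite (negPf jX).
case/orP: (hierarchy_laminar AH DH iA iD) => // sDA.
have [sCD | nsCD] := boolP (C \subset D).
  exact: (least_cluster_sub (P := fun B => C \subset B)) iA iD.
have /eqP eqXD : X == D by rewrite eqEcard sXD; apply: X_max; rewrite DH iD sDA.
by rewrite eqXD jD in jX.
Qed.
End Hierarchy.

Lemma ler_sum_pred (R : numDomainType) (I : finType) (P Q : pred I)
    (F : I -> R) :
  (forall i, P i -> ~~ Q i -> F i <= 0) ->
  (forall i, Q i -> ~~ P i -> 0 <= F i) ->
  \sum_(i | P i) F i <= \sum_(i | Q i) F i.
Proof.
move=> FP FQ; rewrite [leLHS]big_mkcond [leRHS]big_mkcond /=.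
apply: ler_sum => i _.
by case: (boolP (P i)) => Pi; case: (boolP (Q i)) => Qi; rewrite ?FP ?FQ.
Qed.

Definition isolated (R : numDomainType) (T : finType) (d : T -> T -> R)
    (C : {set T}) :=
  forall i j k, i \in C -> j \in C -> k \notin C -> i != j -> d i j < d i k.

Lemma eq_isolated (R : numDomainType) (T : finType) (d1 d2 : T -> T -> R) C :
  (forall i j k, i != j -> i != k -> (d1 i j < d1 i k) = (d2 i j < d2 i k)) ->
  isolated d1 C <-> isolated d2 C.
Proof.
move=> eq_d; have ik i k : i \in C -> k \notin C -> i != k.
  by move=> iC; apply: contraNneq => <-.
by split=> iso i j k iC jC kC ij; [rewrite -eq_d | rewrite eq_d]; auto.
Qed.

Section Tree.
Variables (R : realFieldType) (n : nat).
Variables (H : {set {set 'I_n}}) (w : {set 'I_n} -> R).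

Definition lca_depth (i j : 'I_n) : R :=
  \sum_(C in H | [&& C != [set: 'I_n], i \in C & j \in C]) w C.

Lemma tree_dist_lca_depth i j :
  tree_dist H w i j + 2 * lca_depth i j = root_dist H w i + root_dist H w j.
Proof.
rewrite /tree_dist /lca_depth /root_dist big_distrr /= big_mkcond.
rewrite [X in _ + X = _]big_mkcond [X in _ = X + _]big_mkcond.
rewrite [X in _ = _ + X]big_mkcond.
rewrite -!big_split /=; apply: eq_bigr => C _.
by case: (C \in H); case: (C != _); case: (i \in C); case: (j \in C) => /=; lra.
Qed.

Lemma tree_distC i j : tree_dist H w i j = tree_dist H w j i.
Proof. by apply: eq_bigl => C; rewrite [(i \in C) == _]eq_sym. Qed.

Hypothesis eqH : equidistant_tree H w.

Let hierH : hierarchy H. Proof. by case: eqH. Qed.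

Let w_ge0 C : C \in H -> C != [set: 'I_n] -> 0 <= w C.
Proof. by case: eqH => _ + _; apply. Qed.

Lemma tree_dist_ltE i j k :
  (tree_dist H w i j < tree_dist H w i k) = (lca_depth i k < lca_depth i j).
Proof.
case: eqH => _ _ eq_root; have := tree_dist_lca_depth i j.
have := tree_dist_lca_depth i k; rewrite !(eq_root _ i) => dk dj.
by apply/idP/idP => lt_d; lra.
Qed.

Lemma lca_depth_le i j k :
  (forall D, D \in H -> D != [set: 'I_n] -> i \in D -> j \in D ->
     w D != 0 -> k \in D) ->
  lca_depth i j <= lca_depth i k.
Proof.
move=> sub_k; apply: ler_sum_pred => D.
  case/and4P=> DH DT iD jD; apply: contraR => wD.
  by rewrite DH DT iD sub_k //; apply: contraNneq wD => ->.
by case/and4P=> DH DT _ _ _; apply: w_ge0.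
Qed.

Lemma lca_depth_lt C i j k : C \in H -> C != [set: 'I_n] -> 0 < w C ->
  i \in C -> j \in C -> k \notin C -> lca_depth i k < lca_depth i j.
Proof.
move=> CH CT wC iC jC kC.
rewrite /lca_depth [ltRHS](bigD1 C) /=; last by rewrite CH CT iC jC.
apply: ltr_pwDl => //; apply: ler_sum_pred => [D|D].
  case/and4P=> DH DT iD kD.
  have sCD : C \subset D.
    case/orP: (hierarchy_laminar hierH CH DH iC iD) => // /subsetP/(_ k kD).
    by rewrite (negPf kC).
  rewrite DH DT iD (subsetP sCD j jC) negbK => /eqP eqDC.
  by rewrite -eqDC kD in kC.
by move=> /andP[/and4P[DH DT _ _] _] _; apply: w_ge0.
Qed.

Lemma topology_isolated (C : {set 'I_n}) :
  C \in topology H w -> isolated (tree_dist H w) C.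
Proof.
case/setIdP=> CH /and3P[_ CT wC] i j k iC jC kC _.
by rewrite tree_dist_ltE (lca_depth_lt CH CT wC iC jC kC).
Qed.

Lemma isolated_topology (C : {set 'I_n}) : (1 < #|C|)%N -> C != [set: 'I_n] ->
  isolated (tree_dist H w) C -> C \in topology H w.
Proof.
move=> C_gt1 CT isoC.
have lca_gt i j k : i \in C -> j \in C -> k \notin C -> i != j ->
    ~~ (lca_depth i j <= lca_depth i k).
  by move=> iC jC kC ij; rewrite -ltNge -tree_dist_ltE isoC.
have [A [AH sCA A_min]] :=
  exists_least_cluster hierH (P := fun B => C \subset B) (subsetT C).
have [i [j [iC jC ij sAD]]] := exists_splitting_pair hierH C_gt1 AH sCA A_min.
have eqAC : A = C.
  apply/eqP; rewrite eqEsubset sCA andbT; apply/subsetP => k kA.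
  apply: contraT => kC; have /negP[] := lca_gt _ _ _ iC jC kC ij.
  apply: lca_depth_le => D DH _ iD jD _.
  exact: subsetP (sAD D DH iD jD) k kA.
rewrite {}eqAC in AH sAD.
have wC : 0 < w C.
  rewrite lt_neqAle eq_sym w_ge0 // andbT; apply/eqP => wC0.
  (* Otherwise every cluster through i and j of nonzero weight contains the
     parent U of C, hence a leaf k of U outside C. *)
  have [U [UH ltCU U_min]] := exists_least_cluster hierH
    (P := fun B => C \proper B) (etrans (properT C) CT).
  have /properP[sCU [k kU kC]] := ltCU.
  have /negP[] := lca_gt _ _ _ iC jC kC ij.
  apply: lca_depth_le => D DH _ iD jD wD.
  have ltCD : C \proper D.
    by rewrite properEneq sAD // andbT; apply: contraNneq wD => <-; rewrite wC0.
  have sUD := least_cluster_sub hierH UH U_min DH ltCD (subsetP sCU i iC) iD.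
  exact: subsetP sUD k kU.
by rewrite inE AH C_gt1 CT wC.
Qed.

Lemma mem_topology (C : {set 'I_n}) : C \in topology H w <->
  [/\ (1 < #|C|)%N, C != [set: 'I_n] & isolated (tree_dist H w) C].
Proof.
split=> [topC | [C_gt1 CT isoC]]; last exact: isolated_topology.
case/setIdP: (topC) => _ /and3P[C_gt1 CT _].
by split=> //; apply: topology_isolated.
Qed.
End Tree.

Lemma exists_pair_idx n (i j : 'I_n) : i != j ->
  exists p : pair_idx n, forall (R : realFieldType) H (w : {set 'I_n} -> R),
    ultrametric H w p = tree_dist H w i j.
Proof.
move=> ij; case: (ltngtP i j) => [lt_ij | lt_ji | /val_inj eq_ij].
- by exists (exist _ (i, j) lt_ij).
- by exists (exist _ (j, i) lt_ji) => R H w; rewrite /ultrametric tree_distC.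
- by rewrite eq_ij eqxx in ij.
Qed.

Lemma eq_topology (R : realFieldType) n (H1 H2 : {set {set 'I_n}})
    (w1 w2 : {set 'I_n} -> R) :
  equidistant_tree H1 w1 -> equidistant_tree H2 w2 ->
  (forall i j k, i != j -> i != k ->
     (tree_dist H1 w1 i j < tree_dist H1 w1 i k) =
     (tree_dist H2 w2 i j < tree_dist H2 w2 i k)) ->
  topology H1 w1 = topology H2 w2.
Proof.
move=> eqH1 eqH2 d_lt; apply/setP => C.
apply/idP/idP => [/(mem_topology eqH1) | /(mem_topology eqH2)] [C_gt1 CT isoC].
  by apply/(mem_topology eqH2); split=> //; apply/(eq_isolated C d_lt).
by apply/(mem_topology eqH1); split=> //; apply/(eq_isolated C d_lt).
Qed.

Theorem lemma2 (R : realFieldType) (n : nat)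
  (H1 H2 : {set {set 'I_n}}) (w1 w2 : {set 'I_n} -> R) :
  equidistant_tree H1 w1 -> equidistant_tree H2 w2 ->
  (forall i : nat, (0 < i < 'C(n, 2))%N ->
     argmax_k i (ultrametric H1 w1) = argmax_k i (ultrametric H2 w2)) ->
  topology H1 w1 = topology H2 w2.
Proof.
move=> eqH1 eqH2 eq_argmax; apply: eq_topology eqH1 eqH2 _ => i j k ij ik.
have u_lt := argmax_k_eq_lt (eq_leq (card_pair_idx n)) eq_argmax.
have [p up] := exists_pair_idx ij; have [q uq] := exists_pair_idx ik.
by rewrite -!up -!uq u_lt.
Qed.
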